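(* Let $\psi$ be a reduced function. Then $w_\psi$ is periodic if and only if $\psi(n)=n-1$ for every sufficiently large integer $n$.
   Context: $\mathcal{A}$ is an alphabet disjoint from $\mathbb{N}^*=\{1,2,\dots\}$. A function is a map $\psi:\mathbb{N}^*\to\mathbb{N}^*\sqcup\mathcal{A}$ such that for every $n\ge1$ either $\psi(n)\in\mathcal{A}$ or $1\le\psi(n)\le n-1$. Associated words: $\pi_1=\varepsilon$ and, for $i\ge1$: if $\psi(i)\in\mathcal{A}$, $\pi_{i+1}=\pi_i\psi(i)\pi_i$; if $\psi(i)\in\mathbb{N}^*$, writing $\pi_i=\pi_{\psi(i)}b_i$ (where $\pi_{\psi(i)}$ is a prefix of $\pi_i$), $\pi_{i+1}=\pi_ib_i$. Each $\pi_i$ is a proper prefix of $\pi_{i+1}$, and $w_\psi$ is the infinite word having all $\pi_i$ as prefixes. Let $(t_k)_{k\ge0}$ be the (finite or infinite) family, in increasing order, of all $n\ge1$ with $\psi(n)\in\mathcal{A}$ or $1\le\psi(n)\le n-2$. $\psi$ is reduced if for every $k\ge1$ such that $t_k$ exists: $\psi(t_k)\ne\psi(t_{k-1})$, and either $\psi(t_k)\in\mathcal{A}$ or $\psi(t_k)<t_{k-1}$. *)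

From mathcomp Require Import all_boot.
Set Implicit Arguments. Unset Strict Implicit. Unset Printing Implicit Defensive.

(* A "function" psi : N* -> N* ⊔ A is modelled as psi : nat -> nat + A;
   the value at 0 is irrelevant.  Letters are [inr a], integers [inl m]. *)
Definition is_function (A : Type) (psi : nat -> nat + A) : Prop :=
  forall n, 1 <= n ->
    match psi n with
    | inl m => 1 <= m <= n - 1
    | inr _ => true
    end.

(* pis psi n = [:: pi_1; pi_2; ...; pi_(n+1)] *)
Fixpoint pis (A : Type) (psi : nat -> nat + A) (n : nat) : seq (seq A) :=
  match n with
  | 0 => [:: [::]]
  | i.+1 =>
      let l := pis psi i in
      let p := last [::] l in
      let next :=
        match psi i.+1 with
        | inr a => p ++ a :: p
        | inl m => p ++ drop (size (nth [::] l m.-1)) p   (* pi_m = nth l (m-1) *)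
        end in
      rcons l next
  end.

(* pi_word psi i = pi_i for i >= 1 (and pi_word psi 0 = [::], irrelevant). *)
Definition pi_word (A : Type) (psi : nat -> nat + A) (i : nat) : seq A :=
  last [::] (pis psi i.-1).

(* The infinite word w_psi, indexed from 0: its k-th letter is the k-th letter
   of pi_(k+2), which has length >= k+1 (each pi_i is a proper prefix of
   pi_(i+1) and pi_1 is empty).  We use option to avoid needing an inhabitant
   of A; for a valid psi every value is [Some _]. *)
Definition w_psi (A : Type) (psi : nat -> nat + A) (k : nat) : option A :=
  nth None (map Some (pi_word psi k.+2)) k.

Definition periodic (A : Type) (w : nat -> A) : Prop :=
  exists p, 0 < p /\ forall k, w (k + p) = w k.

(* n belongs to the family (t_k): psi(n) in A or 1 <= psi(n) <= n-2 *)
Definition is_t (A : Type) (psi : nat -> nat + A) (n : nat) : Prop :=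
  1 <= n /\
  match psi n with
  | inl m => 1 <= m <= n - 2
  | inr _ => true
  end.

(* reduced: for any two consecutive members t_(k-1) = m < n = t_k of the family *)
Definition reduced (A : Type) (psi : nat -> nat + A) : Prop :=
  forall m n, m < n -> is_t psi m -> is_t psi n ->
    (forall j, m < j < n -> ~ is_t psi j) ->
    psi n <> psi m /\
    match psi n with
    | inl q => q < m
    | inr _ => true
    end.

(* Write pi_(n+1) = pi_n b_n and M_n = |pi_n| + 1, M_0 = 0.  Then
   M_(n+1) + M_(sigma n) = 2 M_n, where sigma n = psi n, or 0 if psi n is a
   letter, and |b_n| = M_(n+1) - M_n is nondecreasing, strictly increasing at
   each t_k with k >= 1.  Every pi_n is a suffix of pi_(n+1), so pi_n occurs in
   w at position |b_n|.  If psi n = n - 1 eventually, |b_n| is eventually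
   constant and this constant is a period of w.  Conversely, for reduced psi,
   position |b_n| is the first reoccurrence of pi_n (by induction on n; the
   case psi n = n - 1 reduces to n - 1): for n = t_k an earlier one would give
   borders pi_j, pi_l of pi_n with M_j + M_l = M_n + M_(sigma n), and the
   arithmetic of the M's then forces psi t_k = psi t_(k-1), which reducedness
   forbids.  Hence a period p of w satisfies p >= |b_n| for all n, so |b_n|
   is bounded and psi n = n - 1 eventually. *)

From mathcomp Require Import all_boot zify.
From Stdlib Require Import Classical.
Set Implicit Arguments. Unset Strict Implicit. Unset Printing Implicit Defensive.

Lemma mul_between_succ r a b : b * r < a * r -> a * r < b.+2 * r -> a = b.+1.
Proof. by rewrite !ltn_mul2r => /andP[_ b_a] /andP[_ a_b]; lia. Qed.

Section Words.
Variables (A : Type) (psi : nat -> nat + A).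
Hypothesis psi_fun : is_function psi.

Local Notation w := (w_psi psi).

(** * The words pi_n *)

Definition len n := size (pi_word psi n).

Definition pi_step n : seq A :=
  match psi n with
  | inr a => a :: pi_word psi n
  | inl m => drop (len m) (pi_word psi n)
  end.

Lemma size_pis n : size (pis psi n) = n.+1.
Proof. by elim: n => //= n IH; rewrite size_rcons IH. Qed.

Lemma nth_pis n k : k <= n -> nth [::] (pis psi n) k = pi_word psi k.+1.
Proof.
elim: n k => [|n IH] k; first by rewrite leqn0 => /eqP->.
rewrite /= nth_rcons size_pis leq_eqVlt ltnS => /orP[/eqP->|lt_kn].
  by rewrite ltnn eqxx /pi_word /= last_rcons.
by rewrite lt_kn IH.
Qed.

Lemma pi_word_succ n : 1 <= n -> pi_word psi n.+1 = pi_word psi n ++ pi_step n.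
Proof.
case: n => // n _; rewrite /pi_step /pi_word /= last_rcons.
have := psi_fun (ltn0Sn n).
case: (psi n.+1) => // m m_lt.
by rewrite nth_pis ?prednK //; lia.
Qed.

Lemma len_succ n : 1 <= n -> len n.+1 = len n + size (pi_step n).
Proof. by move=> n1; rewrite /len pi_word_succ ?size_cat. Qed.

Lemma len_lt m n : 1 <= m < n -> len m < len n.
Proof.
elim/ltn_ind: n m => n IH m m_n.
have [n' def_n m_n'] : exists2 n', n = n'.+1 & m <= n' by exists n.-1; lia.
have n'1 : 1 <= n' by lia.
have step_gt0 : 0 < size (pi_step n').
  rewrite /pi_step; have := psi_fun n'1.
  by case: (psi n') => // q q_n'; rewrite size_drop subn_gt0 IH //; lia.
have : len m <= len n'.
  by case: (ltngtP m n') m_n' => // [m_lt _|-> _] //; apply: ltnW; apply: IH; lia.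
by rewrite def_n len_succ //; lia.
Qed.

Lemma len_le m n : 1 <= m <= n -> len m <= len n.
Proof.
move=> m_n; case: (ltngtP m n) => [lt_mn|gt_mn|-> //]; last by lia.
by apply: ltnW; apply: len_lt; lia.
Qed.

Lemma len_ge n : n.-1 <= len n.
Proof.
elim: n => // [[//|n] IH].
by have := len_lt (m := n.+1) (n := n.+2); lia.
Qed.

Lemma pi_word_prefix m n : 1 <= m <= n -> exists s, pi_word psi n = pi_word psi m ++ s.
Proof.
elim: n => [|n IH] m_n; first by lia.
case: (ltngtP m n.+1) => [m_lt|m_gt|->]; [|lia|by exists [::]; rewrite cats0].
have [s def_n] := IH ltac:(lia).
by exists (s ++ pi_step n); rewrite pi_word_succ ?def_n ?catA //; lia.
Qed.

Lemma w_onth n k : 1 <= n -> k < len n -> w k = onth (pi_word psi n) k.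
Proof.
move=> n1 k_n; set N := maxn n k.+2.
have onth_N m : 1 <= m <= N -> k < len m -> onth (pi_word psi N) k = onth (pi_word psi m) k.
  by move=> m_N k_m; have [s ->] := pi_word_prefix m_N; rewrite onth_cat k_m.
have k_k2 : k < len k.+2 by have := len_ge k.+2; have := len_lt (m := k.+1) (n := k.+2); lia.
by rewrite /w_psi -onthE -(onth_N k.+2) // ?(onth_N n) //; lia.
Qed.

Lemma len_letter n a : 1 <= n -> psi n = inr a -> len n.+1 = (len n).*2.+1.
Proof. by move=> n1 psi_n; rewrite len_succ // /pi_step psi_n /= -/(len n); lia. Qed.

Lemma len_copy n q : 1 <= n -> psi n = inl q -> len n.+1 = (len n).*2 - len q.
Proof.
move=> n1 psi_n; have := psi_fun n1; rewrite psi_n => q_n.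
by rewrite len_succ // /pi_step psi_n size_drop -/(len n); have := len_lt (m := q) (n := n); lia.
Qed.

Lemma w_letter n a : 1 <= n -> psi n = inr a -> w (len n) = Some a.
Proof.
move=> n1 psi_n; rewrite (w_onth (n := n.+1)) ?(len_letter n1 psi_n) //; last by lia.
by rewrite pi_word_succ // onth_cat ltnn subnn /pi_step psi_n.
Qed.

Lemma w_copy n q e : 1 <= n -> psi n = inl q -> e < len n - len q ->
  w (len n + e) = w (len q + e).
Proof.
move=> n1 psi_n e_lt; rewrite (w_onth (n := n.+1)) ?(len_copy n1 psi_n) //; last by lia.
rewrite (w_onth (n := n)) //; last by lia.
rewrite pi_word_succ // onth_cat -/(len n) ifF ?addKn; last by lia.
by rewrite /pi_step psi_n !onthE map_drop nth_drop.
Qed.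

Lemma pi_word_suffix j n : 1 <= j <= n -> exists u, pi_word psi n = u ++ pi_word psi j.
Proof.
elim: n j => [|n IH] j j_n; first by lia.
case: (ltngtP j n.+1) => [j_lt|j_gt|->]; [|lia|by exists [::]].
have [u def_n] := IH j ltac:(lia).
suff [v ->] : exists v, pi_word psi n.+1 = v ++ pi_word psi n.
  by exists (v ++ u); rewrite def_n catA.
have n1 : 1 <= n by lia.
rewrite pi_word_succ // /pi_step; have := psi_fun n1.
case: (psi n) => [q q_n|a _]; last by exists (rcons (pi_word psi n) a); rewrite cat_rcons.
have [x def_x] := pi_word_prefix (m := q) (n := n) ltac:(lia).
have [y def_y] := IH q ltac:(lia).
have -> : drop (len q) (pi_word psi n) = x by rewrite def_x drop_size_cat.
by exists y; rewrite {1}def_y -catA -def_x.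
Qed.

(** * Reoccurrences of prefixes of w *)

Definition prefix_at s b := forall k, k < b -> w (s + k) = w k.

Lemma prefix_at_letter n a : 1 <= n -> psi n = inr a -> prefix_at (len n).+1 (len n).
Proof.
move=> n1 psi_n k k_n; rewrite (w_onth (n := n.+1)) ?(len_letter n1 psi_n) //; last by lia.
rewrite (w_onth (n := n)) // pi_word_succ // onth_cat -/(len n) /pi_step psi_n.
by rewrite ifF; [have -> : (len n).+1 + k - len n = k.+1 by lia|lia].
Qed.

Lemma prefix_at_suffix j n : 1 <= j <= n -> prefix_at (len n - len j) (len j).
Proof.
move=> j_n k k_j; have [u def_n] := pi_word_suffix j_n.
have size_u : len n - len j = size u by rewrite /len def_n size_cat addnK.
have len_jn := len_le j_n; rewrite (w_onth (n := j) (k := k)); try lia.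
rewrite (w_onth (n := n)); try lia.
by rewrite size_u def_n onth_cat ifF ?addKn //; lia.
Qed.

Lemma prefix_at_period n : 1 <= n -> prefix_at (len n.+1 - len n) (len n).
Proof. by move=> n1; apply: prefix_at_suffix; lia. Qed.

Definition no_early_repeat n := forall s, 0 < s < len n.+1 - len n -> ~ prefix_at s (len n).

Lemma border_len n b : 1 <= n -> (forall j, 1 <= j < n -> no_early_repeat j) ->
  b < len n -> prefix_at (len n - b) b -> exists2 j, 1 <= j < n & len j = b.
Proof.
elim: n => [//|n IH] n1 early b_n border_b.
case: n IH n1 early b_n border_b => [|n] IH _ early b_n border_b; first by [].
have n_n1 := len_lt (m := n.+1) (n := n.+2) ltac:(lia).
case: (ltngtP b (len n.+1)) => [b_lt|b_gt|b_eq]; last by exists n.+1 => //; lia.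
  have border_n : prefix_at (len n.+1 - b) b.
    move=> k k_b; rewrite -(border_b k) //.
    have -> : len n.+2 - b + k = len n.+2 - len n.+1 + (len n.+1 - b + k) by lia.
    by rewrite prefix_at_period //; lia.
  have [j j_n <-] := IH isT (fun j j_n => early j ltac:(lia)) b_lt border_n.
  by exists j => //; lia.
case: (early n.+1 _ (len n.+2 - b)); try lia.
by move=> k k_n; rewrite border_b //; lia.
Qed.

(** * The weights M_n *)

Definition sigma n := if psi n is inl m then m else 0.

(* [weight 0 = 0] makes the letter case fit the recurrence [weight_rec]. *)
Definition weight n := if n is 0 then 0 else (len n).+1.

Definition growth n := weight n.+1 - weight n.

Lemma sigma_lt n : 1 <= n -> sigma n < n.
Proof. by move=> n1; have := psi_fun n1; rewrite /sigma; case: (psi n) => //; lia. Qed.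

Lemma weight_pos n : 1 <= n -> weight n = (len n).+1.
Proof. by case: n. Qed.

Lemma weight_lt : {homo weight : m n / m < n}.
Proof.
apply: homo_ltn => [|[//|n]]; first exact: ltn_trans.
by rewrite !weight_pos // ltnS; apply: len_lt; lia.
Qed.

Lemma weight_mono : {mono weight : m n / m <= n}.
Proof. exact: leq_mono weight_lt. Qed.

Lemma weight_ltn_mono : {mono weight : m n / m < n}.
Proof. exact: leqW_mono weight_mono. Qed.

Lemma weight_inj : injective weight.
Proof. exact: incn_inj weight_mono. Qed.

Lemma weight_rec n : 1 <= n -> weight n.+1 + weight (sigma n) = (weight n).*2.
Proof.
move=> n1; rewrite /sigma (weight_pos n1) (weight_pos (ltn0Sn n)).
case psi_n: (psi n) => [q|a]; last by rewrite (len_letter n1 psi_n) /=; lia.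
have := psi_fun n1; rewrite psi_n => q_n.
by have := len_lt (m := q) (n := n); rewrite (len_copy n1 psi_n) weight_pos; lia.
Qed.

Lemma weight_succ n : weight n.+1 = weight n + growth n.
Proof. by rewrite /growth subnKC // ltnW // weight_lt. Qed.

Lemma growth_len n : 1 <= n -> growth n = len n.+1 - len n.
Proof. by move=> n1; rewrite /growth !weight_pos. Qed.

Lemma growth_sigma n : 1 <= n -> growth n = weight n - weight (sigma n).
Proof.
by move=> n1; have := weight_rec n1; have := weight_lt (sigma_lt n1); rewrite /growth; lia.
Qed.

Lemma growth_gt0 n : 0 < growth n.
Proof. by rewrite subn_gt0 weight_lt. Qed.

Lemma growth_mono : {homo growth : m n / m <= n}.
Proof.
apply: homo_leq => [//||n]; first exact: leq_trans.
rewrite (growth_sigma (n := n.+1)) // /growth leq_sub2l // weight_mono -ltnS.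
exact: sigma_lt.
Qed.

Lemma growth_lt_succ n : sigma n.+1 < n -> growth n < growth n.+1.
Proof.
move=> sigma_n; rewrite (growth_sigma (n := n.+1)) // /growth.
by have := weight_lt sigma_n; have := weight_lt (ltnSn n); lia.
Qed.

Lemma growth_copy_pred n : psi n.+1 = inl n -> growth n.+1 = growth n.
Proof. by move=> psi_n; rewrite (growth_sigma (n := n.+1)) // /sigma psi_n weight_succ addKn. Qed.

(** * The indices t_k *)

Lemma is_t1 : is_t psi 1.
Proof. by split=> //; have := psi_fun (ltn0Sn 0); case: (psi 1) => //; lia. Qed.

Lemma is_t_or_copy_pred n : 2 <= n -> is_t psi n \/ psi n = inl n.-1.
Proof.
move=> n2; have := psi_fun (ltnW n2); rewrite /is_t.
case: (psi n) => [q q_n|a _]; last by left; split; lia.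
by case: (leqP q (n - 2)) => [q_le|q_gt]; [left; split=> /=; lia | right; congr inl; lia].
Qed.

Lemma sigma_is_t n : 2 <= n -> is_t psi n -> sigma n < n.-1.
Proof. by move=> n2 [_]; rewrite /sigma; case: (psi n) => //; lia. Qed.

Definition prev_t m n :=
  [/\ 1 <= m < n, is_t psi m & forall k, m < k < n -> ~ is_t psi k].

Lemma copy_pred_not_t n : psi n = inl n.-1 -> ~ is_t psi n.
Proof. by move=> psi_n [n1]; rewrite psi_n; lia. Qed.

Lemma prev_t_exists n : 2 <= n -> exists m, prev_t m n.
Proof.
elim: n => [//|n IH] n2; have n1 : 1 <= n by lia.
have [t_n|copy_n] : is_t psi n \/ psi n = inl n.-1.
- case: (leqP 2 n) => [/is_t_or_copy_pred //|n_le1].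
  by left; rewrite (_ : n = 1); [exact: is_t1 | lia].
- by exists n; split=> [|//|k]; lia.
have n2' : 2 <= n by have := psi_fun n1; rewrite copy_n; lia.
have [m [m_n t_m no_t]] := IH n2'.
exists m; split=> //; first lia.
move=> k k_n; case: (ltngtP k n) => [k_lt|k_gt|->]; [apply: no_t; lia | lia |].
exact: copy_pred_not_t.
Qed.

Lemma prev_t_copy_pred T i x : prev_t T i -> T < x < i -> psi x = inl x.-1.
Proof.
move=> [T_i _ no_t] x_i.
by have [/(no_t x x_i)|] := is_t_or_copy_pred (n := x) ltac:(lia).
Qed.

Lemma growth_prev_t T i x : prev_t T i -> T <= x < i -> growth x = growth T.
Proof.
move=> prev_T; elim: x => [|x IH] x_i; first by case: prev_T; lia.
have [T_x|<-//] : T < x.+1 \/ T = x.+1 by lia.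
rewrite -IH ?growth_copy_pred //; last by lia.
by apply: prev_t_copy_pred prev_T _; lia.
Qed.

Lemma weight_prev_t T i x : prev_t T i -> T <= x <= i ->
  weight x = weight T + (x - T) * growth T.
Proof.
move=> prev_T; elim: x => [|x IH] x_i; first by case: prev_T; lia.
have [T_x|<-] : T < x.+1 \/ T = x.+1 by lia.
  by rewrite weight_succ IH ?(growth_prev_t prev_T) ?subSn ?mulSn; lia.
by rewrite subnn mul0n addn0.
Qed.

Lemma w_len_prev_t m n x : prev_t m n -> m <= x < n -> w (len x) = w (len m).
Proof.
move=> prev_m; have [/andP[m1 _] _ _] := prev_m.
elim: x => [|x IH] x_n; first by lia.
have [m_x|<-//] : m < x.+1 \/ m = x.+1 by lia.
have psi_x : psi x.+1 = inl x by apply: prev_t_copy_pred prev_m _; lia.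
have x_x1 := len_lt (m := x) (n := x.+1) ltac:(lia).
by rewrite -[len x.+1]addn0 (w_copy _ psi_x) ?addn0 ?IH //; lia.
Qed.

Lemma growth_unbounded : ~ (exists N, forall n, N <= n -> psi n = inl n.-1) ->
  forall B, exists2 n, 1 <= n & B < growth n.
Proof.
move=> not_eventually; elim=> [|B [n n1 B_n]]; first by exists 1; rewrite ?growth_gt0.
have [n' n_n' psi_n'] : exists2 n', n.+2 <= n' & psi n' <> inl n'.-1.
  apply: NNPP => none; apply: not_eventually; exists n.+2 => k k_n.
  by apply: NNPP => psi_k; apply: none; exists k.
have [t_n'|//] := is_t_or_copy_pred (n := n') ltac:(lia).
have := growth_lt_succ (n := n'.-1); rewrite prednK; last by lia.
have := sigma_is_t (n := n') ltac:(lia) t_n'; have := @growth_mono n n'.-1 ltac:(lia).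
by exists n'; lia.
Qed.

(** * Reduced functions *)

Section Reduced.
Hypothesis psi_red : reduced psi.

Lemma prev_t_reduced m n : prev_t m n -> is_t psi n -> psi n <> psi m /\ sigma n < m.
Proof.
move=> [/andP[m1 m_n] t_m no_t] t_n; have [neq_psi sigma_n] := psi_red m_n t_m t_n no_t.
by split=> //; rewrite /sigma; case: (psi n) sigma_n.
Qed.

Lemma weight_lt_growth n : is_t psi n -> weight n < 2 * growth n.
Proof.
elim/ltn_ind: n => n IH t_n; have [n1 _] := t_n.
have sigma_n := weight_lt (sigma_lt n1); rewrite growth_sigma //.
have [->|q1] := posnP (sigma n); first by rewrite /= subn0 weight_pos //; lia.
have [m prev_m] := prev_t_exists (n := n) ltac:(have := sigma_lt n1; lia).
have [_ q_m] := prev_t_reduced prev_m t_n.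
have [/andP[m1 m_n] t_m _] := prev_m.
have [m' prev_m'] := prev_t_exists (n := m) ltac:(lia).
have [_ sm_m'] := prev_t_reduced prev_m' t_m.
have [/andP[m'1 m'_m] t_m' _] := prev_m'.
have := IH m' ltac:(lia) t_m'.
have := @growth_mono m' m.-1 ltac:(lia).
have := weight_succ m.-1; rewrite prednK //.
have := weight_rec m1.
have := weight_mono m.+1 n; have := weight_mono (sigma n) m.-1; have := weight_lt sm_m'.
rewrite m_n; lia.
Qed.

Lemma weight_add_lt_prev_t T i j l : prev_t T i -> j <= l < T ->
  weight j + weight l < weight i.
Proof.
move=> prev_T j_l; have [/andP[T1 T_i] t_T _] := prev_T.
have [l0|l1] := posnP l.
  by have := weight_lt (_ : 0 < i); rewrite (_ : j = 0) ?l0 //=; lia.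
have [m prev_m] := prev_t_exists (n := T) ltac:(lia).
have [_ sT_m] := prev_t_reduced prev_m t_T.
have [/andP[m1 m_T] t_m _] := prev_m.
have := weight_lt_growth t_m.
have := @growth_mono m T.-1 ltac:(lia).
have := weight_succ T.-1; rewrite prednK //.
have := weight_rec T1; have := weight_lt sT_m.
have := weight_mono j T.-1; have := weight_mono l T.-1; have := weight_mono T.+1 i.
rewrite T_i; lia.
Qed.

(* Between T and i the weights grow arithmetically with step [growth T]
   ([weight_prev_t]), and [weight T < 2 * growth T]: this pins the balance down. *)
Lemma weight_balance T i q j l : prev_t T i -> q < j <= l -> l < i ->
  weight j + weight l = weight i + weight q -> T <= j /\ (T <= q \/ q = sigma T).
Proof.
elim/ltn_ind: i T q j l => i IH T q j l prev_T /andP[q_j j_l] l_i balance.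
have [/andP[T1 T_i] t_T _] := prev_T.
have half := weight_lt_growth t_T.
have rho := growth_sigma T1.
have [l_T|T_l] := ltnP l T.
  by have := weight_add_lt_prev_t prev_T (j := j) (l := l) ltac:(lia); lia.
have [T_q|q_T] := leqP T q; first by split; [lia | left].
have w_q := weight_lt q_T.
have w_i := weight_prev_t prev_T (x := i) ltac:(lia).
have w_l := weight_prev_t prev_T (x := l) ltac:(lia).
rewrite (_ : i - T = (l - T) + (i - l)) ?mulnDl in w_i; last by lia.
have [T_j|j_T] := leqP T j.
  have w_j := weight_prev_t prev_T (x := j) ltac:(lia).
  have a_succ : i - l = (j - T).+1.
    by apply: (mul_between_succ (r := growth T)); rewrite ?mulSn; lia.
  rewrite a_succ mulSn in w_i.
  by split=> //; right; apply: weight_inj; lia.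
have w_j := weight_lt j_T; have w_qj := weight_lt q_j.
have a1 : i - l = 1 by apply: (mul_between_succ (r := growth T)); rewrite ?mulSn mul0n; lia.
have balance_T : weight (sigma T) + weight j = weight T + weight q.
  by rewrite a1 mul1n in w_i; lia.
have q_s : q < sigma T by rewrite -weight_ltn_mono; lia.
have s_j : sigma T <= j by rewrite -weight_mono; lia.
have [m prev_m] := prev_t_exists (n := T) ltac:(lia).
have [m_s _] := IH T T_i m q (sigma T) j prev_m ltac:(lia) j_T balance_T.
by have [_ sT_m] := prev_t_reduced prev_m t_T; lia.
Qed.

Lemma weight_balance_sigma m i j l : prev_t m i -> is_t psi i ->
  sigma i < j < i -> sigma i < l < i ->
  weight j + weight l = weight i + weight (sigma i) -> sigma i = sigma m /\ m <= j.
Proof.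
move=> prev_m t_i; have [_ s_m] := prev_t_reduced prev_m t_i.
wlog j_l : j l / j <= l => [wlog_jl j_i l_i balance|].
  have [j_l|l_j] := leqP j l; first exact: (wlog_jl j l).
  by have [-> m_l] := wlog_jl l j (ltnW l_j) l_i j_i ltac:(lia); split; lia.
move=> /andP[s_j j_i] /andP[s_l l_i] balance.
have [m_j [m_s|->//]] := weight_balance prev_m (q := sigma i) (j := j) (l := l) ltac:(lia) l_i balance.
by lia.
Qed.

Lemma repeat_border n s : 1 <= n -> (forall j, 1 <= j < n -> no_early_repeat j) ->
  0 < s <= len n -> prefix_at s (len n) -> exists2 j, 1 <= j < n & len j + s = len n.
Proof.
move=> n1 early s_n rep.
have border : prefix_at (len n - (len n - s)) (len n - s).
  by rewrite subKn; [move=> k k_s; apply: rep; lia | lia].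
have [|j j_n len_j] := border_len n1 early _ border; first by lia.
by exists j => //; lia.
Qed.

Lemma no_early_repeat_copy_pred n : 1 <= n -> psi n.+1 = inl n ->
  no_early_repeat n -> no_early_repeat n.+1.
Proof.
move=> n1 psi_n early s s_lt rep; apply: (early s).
  by rewrite -growth_len // -(growth_copy_pred psi_n) growth_len.
by move=> k k_n; apply: rep; have := len_lt (m := n) (n := n.+1); lia.
Qed.

Lemma no_early_repeat_copy n q : is_t psi n -> psi n = inl q ->
  (forall j, 1 <= j < n -> no_early_repeat j) -> no_early_repeat n.
Proof.
move=> t_n psi_n early s s_lt rep; have [n1 _] := t_n.
have q_n : 1 <= q <= n - 1 by have := psi_fun n1; rewrite psi_n.
have q_lt := len_lt (m := q) (n := n) ltac:(lia).
rewrite (len_copy n1 psi_n) in s_lt.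
have [j j_n len_j] := repeat_border (s := s) n1 early ltac:(lia) rep.
have q_j : q < j by case: (ltnP q j) => // j_q; have := len_le (m := j) (n := q) ltac:(lia); lia.
have border : prefix_at (len n - (len q + s)) (len q + s).
  rewrite (_ : len n - _ = len j - len q); last by lia.
  move=> k k_qs; case: (ltnP k (len q)) => [k_q|q_k].
    by apply: prefix_at_suffix => //; lia.
  rewrite (_ : len j - len q + k = len j + (k - len q)); last by lia.
  rewrite -rep; last by lia.
  rewrite (_ : s + _ = len n + (k - len q)); last by lia.
  by rewrite (w_copy n1 psi_n) ?subnKC //; lia.
have [|l l_n len_l] := border_len n1 early _ border; first by lia.
have q_l : q < l by case: (ltnP q l) => // l_q; have := len_le (m := l) (n := q) ltac:(lia); lia.
have [m prev_m] := prev_t_exists (n := n) ltac:(lia).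
have sigma_n : sigma n = q by rewrite /sigma psi_n.
have [|||sigma_m _] := weight_balance_sigma prev_m t_n (j := j) (l := l); rewrite ?sigma_n; try lia.
  by rewrite !weight_pos //; lia.
have [neq_psi _] := prev_t_reduced prev_m t_n.
by apply: neq_psi; move: sigma_m; rewrite /sigma psi_n; case: (psi m) => [q' <-|b] //; lia.
Qed.

Lemma no_early_repeat_letter n a : 1 <= n -> psi n = inr a ->
  (forall j, 1 <= j < n -> no_early_repeat j) -> no_early_repeat n.
Proof.
move=> n1 psi_n early s s_lt rep; rewrite (len_letter n1 psi_n) in s_lt.
have [j j_n len_j] := repeat_border (s := s) n1 early ltac:(lia) rep.
have w_j : w (len j) = Some a.
  by rewrite -(w_letter n1 psi_n) -len_j addnC rep //; lia.
have border : prefix_at (len n - (s - 1)) (s - 1).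
  rewrite (_ : len n - (s - 1) = (len j).+1); last by lia.
  move=> k k_s; rewrite -(rep ((len j).+1 + k)); last by lia.
  rewrite (_ : s + _ = (len n).+1 + k); last by lia.
  by apply: (prefix_at_letter n1 psi_n); lia.
have [|l l_n len_l] := border_len n1 early _ border; first by lia.
have t_n : is_t psi n by split; rewrite ?psi_n.
have [m prev_m] := prev_t_exists (n := n) ltac:(lia).
have sigma_n : sigma n = 0 by rewrite /sigma psi_n.
have [|||sigma_m m_j] := weight_balance_sigma prev_m t_n (j := j) (l := l); rewrite ?sigma_n; try lia.
  by rewrite /= addn0 !weight_pos //; lia.
have [neq_psi _] := prev_t_reduced prev_m t_n.
have [/andP[m1 _] _ _] := prev_m.
apply: neq_psi; move: sigma_m (w_len_prev_t prev_m (x := j) ltac:(lia)).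
rewrite /sigma psi_n w_j; case psi_m: (psi m) => [q|b].
  by have := psi_fun m1; rewrite psi_m; lia.
by rewrite (w_letter m1 psi_m) => _ [->].
Qed.

Lemma no_early_repeat_all n : 1 <= n -> no_early_repeat n.
Proof.
elim/ltn_ind: n => n IH n1; have early j : 1 <= j < n -> no_early_repeat j.
  by move=> j_n; apply: IH; lia.
case psi_n: (psi n) => [q|a]; last exact: no_early_repeat_letter psi_n early.
have [n2|n_le1] := leqP 2 n; last by have := psi_fun n1; rewrite psi_n; lia.
have [t_n|copy_n] := is_t_or_copy_pred n2; first exact: no_early_repeat_copy t_n psi_n early.
rewrite -(prednK n1) in copy_n *; apply: no_early_repeat_copy_pred copy_n _; first by lia.
by apply: early; lia.
Qed.

Lemma eventually_copy_pred_of_periodic : periodic w ->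
  exists N, forall n, N <= n -> psi n = inl n.-1.
Proof.
move=> [p [p_gt0 per]]; apply: NNPP => not_eventually.
have [n n1 p_n] := growth_unbounded not_eventually p.
apply: (no_early_repeat_all n1 (s := p)); first by rewrite -growth_len //; lia.
by move=> k _; rewrite addnC per.
Qed.

End Reduced.

Lemma periodic_of_eventually_copy_pred :
  (exists N, forall n, N <= n -> psi n = inl n.-1) -> periodic w.
Proof.
move=> [N eventually]; set N1 := maxn N 1.
have growth_N1 d : growth (N1 + d) = growth N1.
  elim: d => [|d IH]; first by rewrite addn0.
  by rewrite addnS growth_copy_pred ?eventually //; lia.
exists (growth N1); split=> [|k]; first exact: growth_gt0.
have k_len : k < len (N1 + k.+1) by have := len_ge (N1 + k.+1); lia.
by rewrite addnC -(growth_N1 k.+1) growth_len ?prefix_at_period //; lia.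
Qed.

End Words.

Theorem corollary4p13 (A : Type) (psi : nat -> nat + A) :
  is_function psi -> reduced psi ->
  (periodic (w_psi psi) <->
   exists N, forall n, N <= n -> psi n = inl n.-1).
Proof.
move=> psi_fun psi_red; split.
  exact: eventually_copy_pred_of_periodic.
exact: periodic_of_eventually_copy_pred.
Qed.
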